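(* Let $C$ be a copula and $\hat C(u,v)=u+v-1+C(1-u,1-v)$ its survival copula. Then for all $p,q\in[0,1]$, $$\lambda^{\hat C}(q|p)=\lambda^C(1-q|1-p),$$ in the sense that one side exists if and only if the other does, and then they are equal.
   Context: For a copula $C$ (bivariate distribution function on $[0,1]^2$ with uniform margins) and $p,q\in[0,1]$, the $(p,q)$-quantile dependence coefficient is $\lambda^C(q|p)=\lim_{t\to0^+}\frac{V_C([(p-t)^+,(p+t)^-]\times[(q-t)^+,(q+t)^-])}{(p+t)^- - (p-t)^+}$ when the limit exists, where $a^+=\max(a,0)$, $a^-=1-(1-a)^+$, and $V_C([u_1,u_2]\times[v_1,v_2])=C(u_2,v_2)-C(u_2,v_1)-C(u_1,v_2)+C(u_1,v_1)$. *)

From Stdlib Require Import Reals.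
From Coquelicot Require Import Coquelicot.
Open Scope R_scope.

Definition ppart (a : R) : R := Rmax a 0.
Definition mpart (a : R) : R := 1 - ppart (1 - a).

Definition VC (C : R -> R -> R) (u1 u2 v1 v2 : R) : R :=
  C u2 v2 - C u2 v1 - C u1 v2 + C u1 v1.

(* A copula: a function on [0,1]^2 (values outside are irrelevant),
   grounded, with uniform margins, and 2-increasing. *)
Definition is_copula (C : R -> R -> R) : Prop :=
  (forall u, 0 <= u <= 1 -> C u 0 = 0 /\ C 0 u = 0) /\
  (forall u, 0 <= u <= 1 -> C u 1 = u /\ C 1 u = u) /\
  (forall u1 u2 v1 v2, 0 <= u1 -> u1 <= u2 -> u2 <= 1 ->
     0 <= v1 -> v1 <= v2 -> v2 <= 1 -> 0 <= VC C u1 u2 v1 v2).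

Definition survival (C : R -> R -> R) : R -> R -> R :=
  fun u v => u + v - 1 + C (1 - u) (1 - v).

(* the difference quotient whose limit as t -> 0+ is lambda^C(q|p) *)
Definition qdc_quot (C : R -> R -> R) (p q t : R) : R :=
  VC C (ppart (p - t)) (mpart (p + t)) (ppart (q - t)) (mpart (q + t))
  / (mpart (p + t) - ppart (p - t)).

Definition has_qdc (C : R -> R -> R) (p q l : R) : Prop :=
  filterlim (qdc_quot C p q) (at_right 0) (locally l).

(** The survival copula assigns to a rectangle the C-volume of its image under
    the point reflection (u, v) |-> (1 - u, 1 - v); since the truncated window
    [(p - t)^+, (p + t)^-] reflects onto [(1 - p - t)^+, (1 - p + t)^-], the two
    difference quotients coincide for every t, and so do their limits. *)

From Stdlib Require Import Reals.
From Coquelicot Require Import Coquelicot.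
Open Scope R_scope.

Lemma ppart_reflect (a : R) : ppart (1 - a) = 1 - mpart a.
Proof. unfold mpart; ring. Qed.

Lemma mpart_reflect (a : R) : mpart (1 - a) = 1 - ppart a.
Proof. unfold mpart; do 2 f_equal; ring. Qed.

Lemma VC_survival (C : R -> R -> R) (u1 u2 v1 v2 : R) :
  VC (survival C) u1 u2 v1 v2 = VC C (1 - u2) (1 - u1) (1 - v2) (1 - v1).
Proof. unfold VC, survival; ring. Qed.

(** No copula property is needed: the identity holds for any function [C]. *)
Lemma qdc_quot_survival (C : R -> R -> R) (p q t : R) :
  qdc_quot (survival C) p q t = qdc_quot C (1 - p) (1 - q) t.
Proof.
  unfold qdc_quot; rewrite VC_survival.
  replace (p - t) with (1 - (1 - p + t)) by ring.
  replace (p + t) with (1 - (1 - p - t)) by ring.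
  replace (q - t) with (1 - (1 - q + t)) by ring.
  replace (q + t) with (1 - (1 - q - t)) by ring.
  rewrite !ppart_reflect, !mpart_reflect.
  unfold Rdiv; do 2 f_equal; ring.
Qed.

Theorem proposition5 (C : R -> R -> R) (HC : is_copula C) (p q : R)
  (Hp : 0 <= p <= 1) (Hq : 0 <= q <= 1) :
  forall l : R, has_qdc (survival C) p q l <-> has_qdc C (1 - p) (1 - q) l.
Proof.
  intro l; unfold has_qdc; split; apply filterlim_ext;
    intro t; rewrite qdc_quot_survival; reflexivity.
Qed.
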